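(* For every $k\ge1$, the element $[c_k,x_2]=c_kx_2-x_2c_k$ does not belong to $S_m$ for any $m\ge1$.
   Context: $K$ is a field of characteristic zero and $K\langle x_2,x_3\rangle$ is the free associative $K$-algebra with unity. $[a,b]=ab-ba$; $c_1=[x_2,x_3]$, $c_{k+1}=[c_k,x_3]$ for $k\ge1$. Let $V$ be the group of automorphisms $\varphi=(x_2+g(x_3),\,x_3+h)$ of $K\langle x_2,x_3\rangle$ with $g\in K\langle x_3\rangle$, $h\in K$, and write $f^\varphi=f(x_2+g(x_3),x_3+h)$. Define $S_1=S=\{f\in K\langle x_2,x_3\rangle\mid f^\varphi=f\ \forall\varphi\in V\}$ and $S_{m+1}=\{f\in K\langle x_2,x_3\rangle\mid f^\varphi-f\in S_m\ \forall\varphi\in V\}$ for $m\ge1$. *)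

From HB Require Import structures.
From mathcomp Require Import all_boot all_order all_algebra.
Set Implicit Arguments. Unset Strict Implicit. Unset Printing Implicit Defensive.
Import GRing.Theory.
Local Open Scope ring_scope.

(* Words in the letters x2, x3 are encoded as [seq bool]
   (false = x2, true = x3).  An element of K<x2,x3> is represented by a
   finite formal linear combination of words, i.e. a list of
   (coefficient, word) pairs; two representations denote the same element
   iff all their word coefficients agree ([nceq]). *)

Section FreeAlg.
Variable K : fieldType.

Definition word := seq bool.
Definition ncpoly := seq (K * word).

Definition nccoef (p : ncpoly) (w : word) : K :=
  \sum_(cw <- p | cw.2 == w) cw.1.

Definition nceq (p q : ncpoly) : Prop := forall w, nccoef p w = nccoef q w.

Definition ncone : ncpoly := [:: (1, [::])].
Definition ncx2 : ncpoly := [:: (1, [:: false])].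
Definition ncx3 : ncpoly := [:: (1, [:: true])].
Definition ncadd (p q : ncpoly) : ncpoly := p ++ q.
Definition ncscale (a : K) (p : ncpoly) : ncpoly := [seq (a * cw.1, cw.2) | cw <- p].
Definition ncopp (p : ncpoly) : ncpoly := ncscale (-1) p.
Definition ncsub (p q : ncpoly) : ncpoly := ncadd p (ncopp q).
Definition ncmul (p q : ncpoly) : ncpoly :=
  [seq (cu.1 * dv.1, cu.2 ++ dv.2) | cu <- p, dv <- q].
Definition nccomm (p q : ncpoly) : ncpoly := ncsub (ncmul p q) (ncmul q p).

Definition ncpoly_x3 (g : {poly K}) : ncpoly :=
  [seq (g`_i, nseq i true) | i <- iota 0 (size g)].

(* The automorphism phi = (x2 + g(x3), x3 + h) of V, acting by substitution
   f |-> f(x2 + g(x3), x3 + h). *)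
Definition img_letter (g : {poly K}) (h : K) (b : bool) : ncpoly :=
  if b then ncadd ncx3 (ncscale h ncone) else ncadd ncx2 (ncpoly_x3 g).
Definition subst_word (g : {poly K}) (h : K) (w : word) : ncpoly :=
  foldr (fun b acc => ncmul (img_letter g h b) acc) ncone w.
Definition ncsubst (g : {poly K}) (h : K) (p : ncpoly) : ncpoly :=
  flatten [seq ncscale cw.1 (subst_word g h cw.2) | cw <- p].

(* S_m, for m >= 1 (the value at m = 0 is irrelevant and set equal to S_1):
   S_1 = { f | f^phi = f for all phi in V },
   S_(m+1) = { f | f^phi - f in S_m for all phi in V }. *)
Fixpoint inS (m : nat) (f : ncpoly) : Prop :=
  match m with
  | 0 | 1 => forall (g : {poly K}) (h : K), nceq (ncsubst g h f) f
  | m'.+1 => forall (g : {poly K}) (h : K), inS m' (ncsub (ncsubst g h f) f)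
  end.

(* c_1 = [x2,x3], c_(k+1) = [c_k, x3]; c_0 := x2 is a harmless convention
   making the recursion uniform. *)
Fixpoint c_ (k : nat) : ncpoly :=
  match k with
  | 0 => ncx2
  | k'.+1 => nccomm (c_ k') ncx3
  end.

End FreeAlg.

From HB Require Import structures.
From mathcomp Require Import all_boot all_order all_algebra.
Set Implicit Arguments. Unset Strict Implicit. Unset Printing Implicit Defensive.
Import GRing.Theory.
Local Open Scope ring_scope.

(* Evaluating x2 |-> A, x3 |-> B in a K-algebra turns the automorphism
   (x2 + g(x3), x3 + h) into the substitution A |-> A + g(B), B |-> B + h, and
   an element of S_m is annihilated by every m-fold composite of the difference
   operators f |-> f^phi - f.  For f = [c_k, x2] apply first (x2 + p(x3), x3) and
   then m - 1 translations (x2, x3 + 1).  Since k >= 1, c_k(A, B) is invariant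
   under all of them, so the m-fold difference evaluates to
   [c_k(A, B), (Delta^(m-1) p)(B)], with Delta the forward difference.  For the
   falling factorial p = X(X-1)...(X-m+1), A = e_12 and B = e_22 this is
   (Delta^m p)(0) e_12 = m! e_12, which is nonzero in characteristic zero. *)

Section Bracket.
Variables (K : fieldType) (R : algType K).
Implicit Types A B G x y z : R.

Definition bracket x y := x * y - y * x.

Lemma bracketDl x y z : bracket (x + y) z = bracket x z + bracket y z.
Proof. by rewrite /bracket mulrDl mulrDr opprD addrACA. Qed.

Lemma bracketDr x y z : bracket x (y + z) = bracket x y + bracket x z.
Proof. by rewrite /bracket mulrDr mulrDl opprD addrACA. Qed.

Lemma bracketBr x y z : bracket x (y - z) = bracket x y - bracket x z.
Proof. by rewrite /bracket mulrBr mulrBl opprD addrACA opprD. Qed.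

Lemma bracket_comm x y : x * y = y * x -> bracket x y = 0.
Proof. by rewrite /bracket => ->; rewrite subrr. Qed.

Lemma bracket_algr x (a : K) : bracket x a%:A = 0.
Proof. by apply: bracket_comm; rewrite mulr_algr mulr_algl. Qed.

Definition c_val A B k := iter k (bracket^~ B) A.

Lemma c_val_translate A B G (h : K) k : (0 < k)%N -> G * B = B * G ->
  c_val (A + G) (B + h%:A) k = c_val A B k.
Proof.
case: k => // k _ GB; rewrite /c_val.
elim: k => [|k IH]; last by rewrite iterS [RHS]iterS IH bracketDr bracket_algr addr0.
by rewrite /= bracketDr bracket_algr addr0 bracketDl (bracket_comm GB) addr0.
Qed.

Lemma c_val_shift A B (h : K) k : (0 < k)%N -> c_val A (B + h%:A) k = c_val A B k.
Proof.
move=> k_gt0; rewrite -[in LHS](addr0 A) c_val_translate //.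
by rewrite mul0r mulr0.
Qed.

End Bracket.

Section ForwardDifference.
Variable R : comNzRingType.
Implicit Types p : {poly R}.

Definition fdiff p := p \Po ('X + 1) - p.

Definition ffpoly (n : nat) : {poly R} := \prod_(i < n) ('X - i%:R%:P).

Lemma iter_fdiffZ n (a : R) p : iter n fdiff (a *: p) = a *: iter n fdiff p.
Proof. by elim: n => //= n ->; rewrite /fdiff comp_polyZ scalerBr. Qed.

Lemma fdiff_ffpoly n : fdiff (ffpoly n.+1) = n.+1%:R *: ffpoly n.
Proof.
rewrite /fdiff /ffpoly rmorph_prod.
rewrite [X in X - _]big_ord_recl [X in _ - X]big_ord_recr /=.
under eq_bigr => i _ do
  rewrite rmorphB /= comp_polyX comp_polyC /bump /= add1n -addn1 natrD rmorphD /=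
    opprD addrACA subrr addr0.
rewrite rmorphB /= comp_polyX comp_polyC subr0 mulrC -mulrBr opprB addrC addrA.
by rewrite subrK -polyC1 -polyCD natr1 mulrC mul_polyC.
Qed.

Lemma iter_fdiff_ffpoly n : iter n fdiff (ffpoly n) = (n`!)%:R%:P.
Proof.
elim: n => [|n IH]; first by rewrite /ffpoly big_ord0.
by rewrite iterSr fdiff_ffpoly iter_fdiffZ IH -mul_polyC -polyCM -natrM.
Qed.

Lemma horner_fdiff p x : (fdiff p).[x] = p.[x + 1] - p.[x].
Proof. by rewrite hornerD hornerN horner_comp hornerD hornerX hornerC. Qed.

End ForwardDifference.

Arguments fdiff {R} p.

Section HornerAlg.
Variables (K : fieldType) (R : algType K).
Implicit Types (B x : R) (p q : {poly K}).

Lemma horner_algE B p : horner_alg B p = \sum_(i < size p) p`_i *: B ^+ i.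
Proof.
rewrite /horner_alg /horner_morph horner_coef size_map_poly.
by apply: eq_bigr => i _; rewrite coef_map /= mulr_algl.
Qed.

Lemma horner_alg_commX B p : horner_alg B p * B = B * horner_alg B p.
Proof.
by have := congr1 (horner_alg B) (commr_polyX p); rewrite !rmorphM /= horner_algX.
Qed.

Lemma horner_alg_comp B p q :
  horner_alg B (p \Po q) = horner_alg (horner_alg B q) p.
Proof.
elim/poly_ind: p => [|p c IH]; first by rewrite comp_poly0 !rmorph0.
by rewrite comp_polyD comp_polyM comp_polyX comp_polyC !rmorphD !rmorphM /=
  IH !horner_algC horner_algX.
Qed.

Lemma horner_alg_eigenl x B (c : K) p :
  x * B = c *: x -> x * horner_alg B p = p.[c] *: x.
Proof.
move=> xB; elim/poly_ind: p => [|p a IH]; first by rewrite rmorph0 mulr0 horner0 scale0r.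
rewrite rmorphD rmorphM /= horner_algC horner_algX hornerMXaddC mulrDr mulrA IH.
by rewrite -scalerAl xB scalerA mulr_algr scalerDl.
Qed.

Lemma horner_alg_eigenr x B (c : K) p :
  B * x = c *: x -> horner_alg B p * x = p.[c] *: x.
Proof.
move=> Bx; elim/poly_ind: p => [|p a IH]; first by rewrite rmorph0 mul0r horner0 scale0r.
rewrite rmorphD rmorphM /= horner_algC horner_algX hornerMXaddC mulrDl -mulrA Bx.
by rewrite -scalerAr IH scalerA mulrC mulr_algl scalerDl.
Qed.

Lemma bracket_horner_alg_eigen x B (a b : K) p :
  x * B = a *: x -> B * x = b *: x ->
  bracket x (horner_alg B p) = (p.[a] - p.[b]) *: x.
Proof.
move=> xB Bx.
by rewrite /bracket (horner_alg_eigenl _ xB) (horner_alg_eigenr _ Bx) scalerBl.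
Qed.

Lemma horner_alg_fdiff B q :
  horner_alg B (fdiff q) = horner_alg (B + 1%:A) q - horner_alg B q.
Proof. by rewrite rmorphB /= horner_alg_comp rmorphD /= horner_algX rmorph1 scale1r. Qed.

End HornerAlg.

Section Evaluation.
Variables (K : fieldType) (R : algType K).
Implicit Types (A B : R) (p q : ncpoly K).

Definition nceval_word A B (w : word) : R :=
  foldr (fun b acc => (if b then B else A) * acc) 1 w.

Definition nceval A B p : R := \sum_(cw <- p) cw.1 *: nceval_word A B cw.2.

Lemma nceval_word_cat A B u v :
  nceval_word A B (u ++ v) = nceval_word A B u * nceval_word A B v.
Proof. by elim: u => [|b u IH] /=; rewrite ?mul1r // IH mulrA. Qed.

Lemma nceval_add A B p q : nceval A B (ncadd p q) = nceval A B p + nceval A B q.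
Proof. exact: big_cat. Qed.

Lemma nceval_scale A B (a : K) p : nceval A B (ncscale a p) = a *: nceval A B p.
Proof.
rewrite /nceval big_map scaler_sumr; apply: eq_bigr => cw _.
by rewrite scalerA.
Qed.

Lemma nceval_sub A B p q : nceval A B (ncsub p q) = nceval A B p - nceval A B q.
Proof. by rewrite nceval_add nceval_scale scaleN1r. Qed.

Lemma nceval_mul A B p q : nceval A B (ncmul p q) = nceval A B p * nceval A B q.
Proof.
rewrite /nceval big_allpairs_dep mulr_suml; apply: eq_bigr => cu _.
rewrite mulr_sumr; apply: eq_bigr => dv _ /=.
by rewrite nceval_word_cat -scalerAl -scalerAr scalerA.
Qed.

Lemma nceval_comm A B p q :
  nceval A B (nccomm p q) = bracket (nceval A B p) (nceval A B q).
Proof. by rewrite nceval_sub !nceval_mul. Qed.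

Lemma nceval_one A B : nceval A B (ncone K) = 1.
Proof. by rewrite /nceval big_seq1 scale1r. Qed.

Lemma nceval_x2 A B : nceval A B (ncx2 K) = A.
Proof. by rewrite /nceval big_seq1 scale1r /= mulr1. Qed.

Lemma nceval_x3 A B : nceval A B (ncx3 K) = B.
Proof. by rewrite /nceval big_seq1 scale1r /= mulr1. Qed.

Lemma nceval_poly_x3 A B g : nceval A B (ncpoly_x3 g) = horner_alg B g.
Proof.
rewrite /nceval /ncpoly_x3 big_map horner_algE.
rewrite -(big_mkord xpredT (fun i => g`_i *: B ^+ i)) /index_iota subn0.
apply: eq_bigr => i _ /=; congr (_ *: _).
by elim: i => //= i ->; rewrite exprS.
Qed.

Lemma nceval_subst_word A B g h w :
  nceval A B (subst_word g h w) = nceval_word (A + horner_alg B g) (B + h%:A) w.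
Proof.
elim: w => [|b w IH] /=; first exact: nceval_one.
rewrite nceval_mul IH; congr (_ * _).
by case: b; rewrite /img_letter nceval_add ?nceval_scale ?nceval_x3 ?nceval_one
  ?nceval_x2 ?nceval_poly_x3.
Qed.

Lemma nceval_subst A B g h p :
  nceval A B (ncsubst g h p) = nceval (A + horner_alg B g) (B + h%:A) p.
Proof.
rewrite /ncsubst /nceval big_flatten big_map; apply: eq_bigr => cw _.
by rewrite -/(nceval _ _ _) nceval_scale nceval_subst_word.
Qed.

Lemma nceval_c_ A B k : nceval A B (c_ K k) = c_val A B k.
Proof. by elim: k => [|k IH] /=; rewrite ?nceval_x2 // nceval_comm IH nceval_x3. Qed.

Lemma nceval_coef A B (s : seq word) p :
  uniq s -> {subset [seq cw.2 | cw <- p] <= s} ->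
  nceval A B p = \sum_(w <- s) nccoef p w *: nceval_word A B w.
Proof.
move=> s_uniq; elim: p => [|cw p IH] p_s.
  by rewrite /nceval big_nil big1 // => w _; rewrite /nccoef big_nil scale0r.
have cw_s : cw.2 \in s by apply: p_s; rewrite inE eqxx.
have coef_cons w : nccoef (cw :: p) w = (if cw.2 == w then cw.1 else 0) + nccoef p w.
  by rewrite /nccoef big_cons; case: eqP; rewrite ?add0r.
rewrite /nceval big_cons -/(nceval A B p) IH => [|w pw]; last first.
  by apply: p_s; rewrite inE pw orbT.
under [RHS]eq_bigr => w _ do rewrite coef_cons scalerDl.
rewrite big_split /=; congr (_ + _).
rewrite (bigD1_seq cw.2) //= eqxx big1 ?addr0 // => w.
by rewrite eq_sym => /negbTE ->; rewrite scale0r.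
Qed.

Lemma nceval_nceq A B p q : nceq p q -> nceval A B p = nceval A B q.
Proof.
move=> pq; pose s := undup ([seq cw.2 | cw <- p] ++ [seq cw.2 | cw <- q]).
have s_uniq : uniq s by rewrite undup_uniq.
rewrite (@nceval_coef A B s p s_uniq) => [|w ws]; last first.
  by rewrite mem_undup mem_cat ws.
rewrite (@nceval_coef A B s q s_uniq) => [|w ws]; last first.
  by rewrite mem_undup mem_cat ws orbT.
by apply: eq_bigr => w _; rewrite pq.
Qed.

End Evaluation.

Section Differences.
Variable K : fieldType.
Implicit Types (f : ncpoly K) (gs : nat -> {poly K}) (hs : nat -> K).

Definition ncdiff (g : {poly K}) (h : K) f := ncsub (ncsubst g h f) f.

Fixpoint ncdiffs gs hs f j : ncpoly K :=
  if j is j'.+1 then ncdiff (gs j') (hs j') (ncdiffs gs hs f j') else f.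

Lemma inS_ncdiffs gs hs f n j :
  inS n.+1 (ncdiffs gs hs f j) -> inS 1 (ncdiffs gs hs f (n + j)).
Proof.
elim: n j => [|n IH] j fS //; rewrite addSnnS; apply: IH; exact: fS.
Qed.

Variable R : algType K.

Lemma nceval_ncdiff (A B : R) g h f :
  nceval A B (ncdiff g h f) =
  nceval (A + horner_alg B g) (B + h%:A) f - nceval A B f.
Proof. by rewrite nceval_sub nceval_subst. Qed.

Lemma nceval_ncdiffs_inS (A B : R) gs hs f n :
  inS n.+1 f -> nceval A B (ncdiffs gs hs f n.+1) = 0.
Proof.
move=> /(@inS_ncdiffs gs hs f n 0); rewrite addn0 => fS.
by rewrite /= nceval_sub (nceval_nceq _ _ (fS _ _)) subrr.
Qed.

End Differences.

Section Probe.
Variables (K : fieldType) (R : algType K).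

Definition probe_poly (p : {poly K}) (j : nat) : {poly K} := if j is 0 then p else 0.

Definition probe_shift (j : nat) : K := if j is 0 then 0 else 1.

Lemma nceval_probe p k j (A B : R) : (0 < k)%N ->
  nceval A B (ncdiffs (probe_poly p) probe_shift (nccomm (c_ K k) (ncx2 K)) j.+1) =
  bracket (c_val A B k) (horner_alg B (iter j fdiff p)).
Proof.
move=> k_gt0; elim: j A B => [|j IH] A B.
  rewrite nceval_ncdiff !nceval_comm !nceval_c_ !nceval_x2.
  rewrite c_val_translate ?horner_alg_commX // bracketDr.
  by rewrite addrAC subrr add0r.
rewrite [ncdiffs _ _ _ _]/= nceval_ncdiff /= rmorph0 addr0 !IH c_val_shift //.
by rewrite horner_alg_fdiff bracketBr.
Qed.

End Probe.

Theorem proposition1 (K : fieldType) (charK0 : [pchar K] =i pred0)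
    (k m : nat) (hk : (1 <= k)%N) (hm : (1 <= m)%N) :
  ~ inS m (nccomm (c_ K k) (ncx2 K)).
Proof.
case: m hm => // n _ fS.
pose E : 'M[K]_2 := delta_mx 0 1; pose B : 'M[K]_2 := delta_mx 1 1.
have EB : E * B = 1 *: E by rewrite scale1r -mulmxE mul_delta_mx.
have BE : B * E = 0 *: E by rewrite scale0r -mulmxE mul_delta_mx_0.
have c_valE j : c_val E B j = E.
  by elim: j => //= j ->; rewrite /bracket EB BE scale1r scale0r subr0.
have E_neq0 : E != 0.
  by apply/eqP => /matrixP /(_ 0 1); rewrite !mxE !eqxx; apply/eqP/oner_neq0.
have := nceval_ncdiffs_inS E B (probe_poly (ffpoly K n.+1)) (probe_shift K) fS.
rewrite nceval_probe // c_valE (bracket_horner_alg_eigen _ EB BE) -[1]add0r.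
rewrite -horner_fdiff -iterS iter_fdiff_ffpoly hornerC => /eqP.
rewrite scaler_eq0 (negbTE E_neq0) orbF ((pcharf0P K).1 charK0).
by rewrite eqn0Ngt fact_gt0.
Qed.
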